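(* There exist a tree $\Gamma$ as described, coefficients $\lambda_x>0$, $\beta_x\in\mathbb R$ ($x\in\Gamma$), and a real number $t$ such that the only function $v:\Gamma\to\mathbb C$ satisfying $(Jv)(x)=tv(x)$ for all $x\in\Gamma$ is $v\equiv0$.
   Context: A tree $\Gamma$ ''as described'' is an infinite connected tree whose vertices are arranged in levels $\ell(x)\in\{0,1,2,\dots\}$: every vertex $x$ is adjacent to exactly one vertex $x'$ with $\ell(x')=\ell(x)+1$; for $\ell(x)\ge 1$ the set $N_x=\{y:\ y'=x\}$ of neighbours of $x$ on level $\ell(x)-1$ is finite and nonempty; $N_x=\emptyset$ if $\ell(x)=0$; there are no other edges. Given $\lambda_x>0$, $\beta_x\in\mathbb R$, the Jacobi matrix $J$ acts on functions $v:\Gamma\to\mathbb C$ by $(Jv)(x)=\lambda_x v(x')+\beta_x v(x)+\sum_{y\in N_x}\lambda_y v(y)$. *)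

From Stdlib Require Import Reals List.
Open Scope R_scope.

Record Cplx : Type := mkC { Cre : R; Cim : R }.

Definition C0 : Cplx := mkC 0 0.
Definition Cadd (a b : Cplx) : Cplx := mkC (Cre a + Cre b) (Cim a + Cim b).
Definition Crmul (r : R) (a : Cplx) : Cplx := mkC (r * Cre a) (r * Cim a).

(* A tree "as described": vertices V, level function, the upper neighbour
   x' = par x, and the list ch x enumerating (without repetition) the finite
   set N_x = { y | y' = x }.  Edges are exactly {x, par x}. *)
Definition is_level_tree (V : Type) (level : V -> nat) (par : V -> V)
  (ch : V -> list V) : Prop :=
  (forall l : list V, exists x, ~ In x l) /\
  (* connected: any two vertices have a common ancestor *)
  (forall x y : V, exists n m : nat, Nat.iter n par x = Nat.iter m par y) /\
  (forall x, level (par x) = S (level x)) /\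
  (forall x y, In y (ch x) <-> par y = x) /\
  (forall x, NoDup (ch x)) /\
  (forall x, (1 <= level x)%nat -> ch x <> nil) /\
  (forall x, level x = 0%nat -> ch x = nil).

Definition Jop (V : Type) (par : V -> V) (ch : V -> list V)
  (lam beta : V -> R) (v : V -> Cplx) (x : V) : Cplx :=
  Cadd (Cadd (Crmul (lam x) (v (par x))) (Crmul (beta x) (v x)))
       (fold_right (fun y acc => Cadd (Crmul (lam y) (v y)) acc) C0 (ch x)).

From Stdlib Require Import Reals List Lra Lia.
Open Scope R_scope.

(* Take a comb: an infinite spine of vertices on levels 0, 1, 2, ... and, below
   the spine vertex on level n + 1, a finite tooth of length n + 1 reaching
   down to level 0.  With all [lambda_x = 1] and [t = 0], choose [beta] so that
   along a tooth the equation [J v = 0] is the discrete Laplace equation,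
   closed by a Neumann condition at its bottom: every solution is then
   constant on each tooth, and the equation at the top of the tooth forces the
   spine vertex above it to vanish.  Once the spine vanishes, the equations on
   the spine kill the tops of the teeth, hence the teeth.  Real and imaginary
   parts of a complex solution solve the same real system. *)

Definition RJop (V : Type) (par : V -> V) (ch : V -> list V)
  (lam beta : V -> R) (w : V -> R) (x : V) : R :=
  lam x * w (par x) + beta x * w x +
  fold_right (fun y acc => lam y * w y + acc) 0 (ch x).

Section RealReduction.

Variables (V : Type) (par : V -> V) (ch : V -> list V) (lam beta : V -> R).

Lemma Cre_Jop (v : V -> Cplx) (x : V) :
  Cre (Jop V par ch lam beta v x) = RJop V par ch lam beta (fun y => Cre (v y)) x.
Proof.
  unfold Jop, RJop; simpl; f_equal.
  induction (ch x) as [|y l IH]; simpl; [reflexivity | now rewrite IH].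
Qed.

Lemma Cim_Jop (v : V -> Cplx) (x : V) :
  Cim (Jop V par ch lam beta v x) = RJop V par ch lam beta (fun y => Cim (v y)) x.
Proof.
  unfold Jop, RJop; simpl; f_equal.
  induction (ch x) as [|y l IH]; simpl; [reflexivity | now rewrite IH].
Qed.

Lemma Jop_kernel_trivial (t : R) :
  (forall w : V -> R,
     (forall x, RJop V par ch lam beta w x = t * w x) -> forall x, w x = 0) ->
  forall v : V -> Cplx,
    (forall x, Jop V par ch lam beta v x = Crmul t (v x)) -> forall x, v x = C0.
Proof.
  intros Hreal v Hv x.
  assert (Hre : Cre (v x) = 0).
  { apply (Hreal (fun y => Cre (v y))); intro y.
    now rewrite <- Cre_Jop, Hv. }
  assert (Him : Cim (v x) = 0).
  { apply (Hreal (fun y => Cim (v y))); intro y.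
    now rewrite <- Cim_Jop, Hv. }
  destruct (v x) as [a b]; simpl in *; now subst.
Qed.

End RealReduction.

Lemma unbounded_level_infinite (V : Type) (level : V -> nat) :
  (forall n, exists x, n < level x)%nat -> forall l : list V, exists x, ~ In x l.
Proof.
  intros Hunb l.
  destruct (Hunb (list_max (map level l))) as [x Hx].
  exists x; intro Hin.
  assert (Hle : (level x <= list_max (map level l))%nat).
  { pose proof (proj1 (list_max_le _ _) (le_n (list_max (map level l)))) as Hall.
    rewrite Forall_forall in Hall; apply Hall, in_map, Hin. }
  lia.
Qed.

(* [Tooth j k] lies [j] steps below the top of the tooth hanging from
   [Spine (S (j + k))]; its level is [k]. *)
Inductive comb : Type := Spine (n : nat) | Tooth (j k : nat).

Definition comb_level (x : comb) : nat :=
  match x with Spine n => n | Tooth _ k => k end.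

Definition comb_parent (x : comb) : comb :=
  match x with
  | Spine n => Spine (S n)
  | Tooth 0 k => Spine (S k)
  | Tooth (S j) k => Tooth j (S k)
  end.

Definition comb_children (x : comb) : list comb :=
  match x with
  | Spine 0 => nil
  | Spine (S n) => Spine n :: Tooth 0 n :: nil
  | Tooth _ 0 => nil
  | Tooth j (S k) => Tooth (S j) k :: nil
  end.

Definition comb_lam (x : comb) : R := 1.

Definition comb_beta (x : comb) : R :=
  match x with
  | Spine 0 => 1
  | Spine _ => 0
  | Tooth 0 0 => 0
  | Tooth _ 0 => -1
  | Tooth 0 _ => -1
  | Tooth _ _ => -2
  end.

Lemma iter_parent_Spine (m n : nat) :
  Nat.iter m comb_parent (Spine n) = Spine (m + n).
Proof. induction m as [|m IH]; simpl; [reflexivity | now rewrite IH]. Qed.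

Lemma iter_parent_Tooth (j k : nat) :
  Nat.iter (S j) comb_parent (Tooth j k) = Spine (S (j + k)).
Proof.
  revert k; induction j as [|j IH]; intro k; [reflexivity|].
  rewrite Nat.iter_succ_r; cbn [comb_parent]; rewrite IH; f_equal; lia.
Qed.

Lemma comb_reaches_spine (x : comb) :
  exists a n, Nat.iter a comb_parent x = Spine n.
Proof.
  destruct x as [n|j k].
  - now exists 0%nat, n.
  - exists (S j), (S (j + k)); apply iter_parent_Tooth.
Qed.

Lemma comb_connected (x y : comb) :
  exists n m, Nat.iter n comb_parent x = Nat.iter m comb_parent y.
Proof.
  destruct (comb_reaches_spine x) as [a [p Ha]].
  destruct (comb_reaches_spine y) as [b [q Hb]].
  exists (q + a)%nat, (p + b)%nat.
  rewrite !Nat.iter_add, Ha, Hb, !iter_parent_Spine; f_equal; lia.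
Qed.

Lemma In_comb_children (x y : comb) :
  In y (comb_children x) <-> comb_parent y = x.
Proof.
  split.
  - destruct x as [[|n]|j [|k]]; simpl; try tauto.
    + intros [<-|[<-|[]]]; reflexivity.
    + intros [<-|[]]; reflexivity.
  - intros <-; destruct y as [n|[|j] k]; simpl; auto.
Qed.

Lemma comb_is_level_tree :
  is_level_tree comb comb_level comb_parent comb_children.
Proof.
  repeat split.
  - apply (unbounded_level_infinite comb comb_level).
    intro n; exists (Spine (S n)); simpl; lia.
  - apply comb_connected.
  - intros [n|[|j] k]; reflexivity.
  - apply In_comb_children.
  - apply In_comb_children.
  - intros [[|n]|j [|k]]; simpl; repeat constructor; simpl; try tauto;
      intros [H|H]; [discriminate | exact H].
  - intros [[|n]|j [|k]]; simpl; intro H; [lia|discriminate|lia|discriminate].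
  - intros [[|n]|j [|k]]; simpl; intro H; [reflexivity|lia|reflexivity|lia].
Qed.

Section CombKernel.

Variable w : comb -> R.
Hypothesis Hw :
  forall x, RJop comb comb_parent comb_children comb_lam comb_beta w x = 0 * w x.

Ltac eq_at x :=
  let E := fresh in pose proof (Hw x) as E; unfold RJop, comb_lam in E; cbn in E.

Lemma tooth_step (k j : nat) : w (Tooth j (S k)) = w (Tooth (S j) k).
Proof.
  revert j; induction k as [|k IH]; intro j.
  - eq_at (Tooth (S j) 0); lra.
  - eq_at (Tooth (S j) (S k)); rewrite <- (IH (S j)) in *; lra.
Qed.

Lemma tooth_constant (j k : nat) : w (Tooth j k) = w (Tooth 0 (j + k)).
Proof.
  revert k; induction j as [|j IH]; intro k; [reflexivity|].
  rewrite <- tooth_step, IH; f_equal; f_equal; lia.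
Qed.

Lemma spine_vanishes (n : nat) : w (Spine n) = 0.
Proof.
  assert (Habove : forall n, w (Spine (S n)) = 0).
  { intros [|m].
    - eq_at (Tooth 0 0); lra.
    - eq_at (Tooth 0 (S m)); rewrite <- tooth_step in *; lra. }
  destruct n as [|n]; [|apply Habove].
  eq_at (Spine 0); rewrite Habove in *; lra.
Qed.

Lemma comb_real_kernel_trivial (x : comb) : w x = 0.
Proof.
  destruct x as [n|j k]; [apply spine_vanishes|].
  rewrite tooth_constant.
  eq_at (Spine (S (j + k))); rewrite !spine_vanishes in *; lra.
Qed.

End CombKernel.

Theorem proposition5 :
  exists (V : Type) (level : V -> nat) (par : V -> V) (ch : V -> list V)
         (lam beta : V -> R) (t : R),
    is_level_tree V level par ch /\
    (forall x, 0 < lam x) /\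
    (forall v : V -> Cplx,
       (forall x, Jop V par ch lam beta v x = Crmul t (v x)) ->
       forall x, v x = C0).
Proof.
  exists comb, comb_level, comb_parent, comb_children, comb_lam, comb_beta, 0.
  split; [exact comb_is_level_tree|split].
  - intro x; unfold comb_lam; lra.
  - apply Jop_kernel_trivial, comb_real_kernel_trivial.
Qed.
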